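(* Let $\mathbf X=\{X_n\}_{n\ge1}$ and $\mathbf Y=\{Y_n\}_{n\ge1}$ be general sources. Suppose that $$\text{for every }\gamma\in\mathbb R:\qquad \lim_{n\to\infty}\mu\big(\{\delta\in[0,1): c_n^x(\delta)-c_n^y(\delta)<\gamma\}\big)=0$$ (equivalently, $\mu\text{-}\liminf_{n\to\infty}\{c_n^x(\delta)-c_n^y(\delta)\}=\infty$). Then $\mathbf X$ is an approximating source for $\mathbf Y$.
   Context: Logarithms are natural. A general source $\mathbf X=\{X_n\}_{n\ge1}$ is a sequence of random variables, $X_n$ taking values in a countable set $\mathcal X_n$, with no consistency requirements between different $n$. Similarly $Y_n$ takes values in a countable set $\mathcal Y_n$. For a random variable $Z$ on a countable set $\mathcal Z$ with pmf $P_Z$, list the elements of positive probability as $z_1,z_2,\dots$ (a finite or countably infinite list) with $P_Z(z_1)\ge P_Z(z_2)\ge\cdots$ (ties broken arbitrarily). Set $\delta_0=0$ and $\delta_k=\sum_{i\le k}P_Z(z_i)$. For $\delta\in[0,1)$ define $c^z(\delta)=\log\frac{1}{P_Z(z_k)}$, where $k$ is the unique index with $\delta\in[\delta_{k-1},\delta_k)$. Here $c_n^x$ and $c_n^y$ denote this function built from $P_{X_n}$ and from $P_{Y_n}$ respectively. The variational distance is $d(P,Q)=\sum_a|P(a)-Q(a)|$. $\mathbf X$ is an approximating source for $\mathbf Y$ if there exist deterministic maps $\phi_n:\mathcal X_n\to\mathcal Y_n$ with $\lim_{n\to\infty}d(P_{Y_n},P_{\phi_n(X_n)})=0$. $\mu$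 denotes Lebesgue measure. *)

From Stdlib Require Import Reals.
From mathcomp Require Import ssreflect ssrfun ssrbool eqtype ssrnat choice.

Set Implicit Arguments.
Unset Strict Implicit.

Open Scope R_scope.

(* k-th term of the canonical enumeration of a countable type: each element
   of T occurs exactly once (at index pickle x), other indices give 0. *)
Definition cterm (T : countType) (f : T -> R) (k : nat) : R :=
  match @pickle_inv T k with Some x => f x | None => 0 end.

(* sum_{x in T} f x = l  (f will always be nonnegative here, so the order of
   summation is irrelevant) *)
Definition has_csum (T : countType) (f : T -> R) (l : R) : Prop :=
  infinite_sum (cterm f) l.

Definition is_pmf (T : countType) (P : T -> R) : Prop :=
  (forall x, 0 <= P x) /\ has_csum P 1.

(* A listing z_1, z_2, ... (0-indexed here: e 0, e 1, ...) of the elements of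
   positive probability, finite (then e i = None from some index on) or
   countably infinite, with nonincreasing probabilities; ties arbitrary. *)
Definition sorted_listing (T : countType) (P : T -> R) (e : nat -> option T)
  : Prop :=
  (forall i, e i = None -> e (S i) = None) /\
  (forall i j x, e i = Some x -> e j = Some x -> i = j) /\
  (forall i x, e i = Some x -> 0 < P x) /\
  (forall x, 0 < P x -> exists i, e i = Some x) /\
  (forall i j x y, e i = Some x -> e j = Some y -> (i <= j)%nat -> P y <= P x).

(* probability of the (i+1)-th listed element, i.e. P_Z(z_{i+1}) *)
Definition lprob (T : countType) (P : T -> R) (e : nat -> option T) (i : nat)
  : R := match e i with Some x => P x | None => 0 end.

(* cumulative sums: cum k = delta_k = sum_{i<=k} P_Z(z_i) (1-indexed) *)
Fixpoint cum (T : countType) (P : T -> R) (e : nat -> option T) (k : nat) : R :=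
  match k with
  | O => 0
  | S k' => cum P e k' + lprob P e k'
  end.

(* c^z(delta) = v :  v = log (1 / P_Z(z_k)) where delta in [delta_{k-1}, delta_k)
   (k is 1-indexed in the paper; here k = S i). *)
Definition cval (T : countType) (P : T -> R) (e : nat -> option T)
  (delta v : R) : Prop :=
  exists i, cum P e i <= delta < cum P e (S i) /\ v = ln (1 / lprob P e i).

Definition outer_measure_le (A : R -> Prop) (r : R) : Prop :=
  forall eps, 0 < eps ->
  exists a b : nat -> R,
    (forall i, a i <= b i) /\
    (forall x, A x -> exists i, a i < x < b i) /\
    (forall m, sum_f_R0 (fun i => b i - a i) m <= r + eps).

Definition measure_tends_to_zero (A : nat -> R -> Prop) : Prop :=
  forall eps, 0 < eps -> exists N, forall n, (N <= n)%nat ->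
    outer_measure_le (A n) eps.

Definition pushforward_is (TX TY : countType) (PX : TX -> R) (phi : TX -> TY)
  (y : TY) (q : R) : Prop :=
  has_csum (fun x => if phi x == y then PX x else 0) q.

Definition var_dist_push_is (TX TY : countType) (PX : TX -> R) (PY : TY -> R)
  (phi : TX -> TY) (d : R) : Prop :=
  exists Q : TY -> R,
    (forall y, pushforward_is PX phi y (Q y)) /\
    has_csum (fun y => Rabs (PY y - Q y)) d.

Definition approximating_source (X Y : nat -> countType)
  (PX : forall n, X n -> R) (PY : forall n, Y n -> R) : Prop :=
  exists phi : forall n, X n -> Y n,
    forall eps, 0 < eps -> exists N, forall n, (N <= n)%nat ->
      exists d, var_dist_push_is (PX n) (PY n) (phi n) d /\ d < eps.

(* Let a_i, p_i (resp. b_j, q_j) be the cumulative sums and the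
   probabilities of the sorted listing of X_n (resp. Y_n); c^x = ln (1/p_i) on
   the cell [a_i, a_{i+1}) and c^y = ln (1/q_j) on [b_j, b_{j+1}).  Map the
   i-th element of X_n to the j-th element of Y_n when a_i lies in
   [b_j, b_{j+1}).  With H(t) = sum_{a_i < t} p_i, y_j receives the mass
   H(b_{j+1}) - H(b_j), so the variational distance is sum_j |D_j| where D_j
   is the increment of the excess f(t) = H(t) - t >= 0 over [b_j, b_{j+1}].
   The D_j telescope to a nonnegative total, hence sum_j |D_j| <= 2 sum_j
   max(0, D_j).  A positive D_j either comes with a whole block
   [b_{j+1}, H(b_{j+1})) on which c^x - c^y < gamma, or with a point of that
   block where c^x - c^y >= gamma, which forces D_j <= e^{-gamma} q_j.  The
   blocks are disjoint, so the distance is at most 2 (e^{-gamma} + mu(bad)). *)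

From Stdlib Require Import Reals Lra Lia Classical ClassicalEpsilon.
From mathcomp Require Import ssreflect ssrfun ssrbool eqtype ssrnat choice.
From mathcomp Require all_boot all_order all_algebra.
From mathcomp Require all_classical all_reals all_analysis Rstruct Rstruct_topology.
Open Scope R_scope.

Fixpoint psum (u : nat -> R) (K : nat) : R :=
  match K with O => 0 | S K' => psum u K' + u K' end.

Lemma psum_sum_f_R0 u n : sum_f_R0 u n = psum u (S n).
Proof. induction n as [|n IH]; simpl; [lra|]. simpl in IH. rewrite IH. lra. Qed.

Lemma psum_nonneg u K : (forall i, 0 <= u i) -> 0 <= psum u K.
Proof. intro H. induction K; simpl; [lra|]. specialize (H K). lra. Qed.

Lemma psum_mono u K K' : (forall i, 0 <= u i) -> (K <= K')%coq_nat -> psum u K <= psum u K'.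
Proof. intros H HK. induction HK; [lra|]. simpl. specialize (H m). lra. Qed.

Lemma psum_le u v K : (forall i, (i < K)%coq_nat -> u i <= v i) -> psum u K <= psum v K.
Proof.
  induction K; intro H; simpl; [lra|].
  assert (psum u K <= psum v K) by (apply IHK; intros; apply H; lia).
  specialize (H K ltac:(lia)). lra.
Qed.

Lemma psum_ext u v K : (forall i, (i < K)%coq_nat -> u i = v i) -> psum u K = psum v K.
Proof.
  induction K; intro H; simpl; [lra|].
  rewrite IHK; [|intros; apply H; lia]. rewrite (H K ltac:(lia)). lra.
Qed.

Lemma psum_plus u v K : psum (fun i => u i + v i) K = psum u K + psum v K.
Proof. induction K; simpl; lra. Qed.

Lemma psum_minus u v K : psum (fun i => u i - v i) K = psum u K - psum v K.
Proof. induction K; simpl; lra. Qed.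

Lemma psum_scal c u K : psum (fun i => c * u i) K = c * psum u K.
Proof. induction K; simpl; lra. Qed.

Lemma psum_telescope (f : nat -> R) K : psum (fun i => f (S i) - f i) K = f K - f O.
Proof. induction K; simpl; lra. Qed.

Lemma psum_remove v i0 K : (i0 < K)%coq_nat ->
  psum v K = psum (fun i => if Nat.eqb i i0 then 0 else v i) K + v i0.
Proof.
  induction K; intro H; [lia|]. simpl.
  destruct (Nat.eq_dec K i0) as [->|Hne].
  - rewrite Nat.eqb_refl.
    rewrite (psum_ext (fun i => if Nat.eqb i i0 then 0 else v i) v); [lra|].
    intros i Hi. destruct (Nat.eqb_spec i i0); [lia|auto].
  - rewrite IHK; [|lia]. destruct (Nat.eqb_spec K i0); [lia|]. lra.
Qed.

(* This is the combinatorial core of the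
   rearrangement of nonnegative series. *)
Lemma psum_matching (u : nat -> R) (match_ : nat -> nat -> Prop) K K' :
  (forall k k' i, (k < K)%coq_nat -> (k' < K)%coq_nat ->
     match_ k i -> match_ k' i -> k = k') ->
  forall v : nat -> R, (forall i, 0 <= v i) ->
  (forall k, (k < K)%coq_nat ->
     u k = 0 \/ exists i, (i < K')%coq_nat /\ u k <= v i /\ match_ k i) ->
  psum u K <= psum v K'.
Proof.
  induction K as [|K IH]; intros Hinj v Hv H; simpl.
  - apply psum_nonneg; auto.
  - destruct (H K ltac:(lia)) as [H0|[i0 [Hi0 [Hle HR]]]].
    + rewrite H0. assert (psum u K <= psum v K'); [|lra].
      apply IH; [ |exact Hv| ].
      * intros k k' i Hk Hk' H1 H2; apply (Hinj k k' i); auto; lia.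
      * intros k Hk; apply H; lia.
    + rewrite (psum_remove v i0 K' Hi0).
      assert (psum u K <= psum (fun i => if Nat.eqb i i0 then 0 else v i) K'); [|lra].
      apply IH.
      * intros; apply (Hinj k k' i); auto; lia.
      * intro i; destruct (Nat.eqb i i0); [lra|auto].
      * intros k Hk. destruct (H k ltac:(lia)) as [?|[i [Hi [Hl HRk]]]]; [left; auto|right].
        exists i. split; [auto|]. destruct (Nat.eqb_spec i i0) as [->|]; [|auto].
        assert (k = K) by (apply (Hinj k K i0); auto; lia). lia.
Qed.

Lemma nnseries_iff u l : (forall i, 0 <= u i) ->
  (infinite_sum u l <->
   (forall K, psum u K <= l) /\ (forall eps, 0 < eps -> exists K, l - eps < psum u K)).
Proof.
  intro Hu. split.
  - intro H. split.
    + intro K. destruct (Rle_dec (psum u K) l) as [|Hn]; auto. exfalso.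
      destruct (H (psum u K - l)) as [N HN]; [lra|].
      specialize (HN (N + K)%coq_nat ltac:(lia)). rewrite psum_sum_f_R0 in HN.
      assert (psum u K <= psum u (S (N+K)%coq_nat)) by (apply psum_mono; auto; lia).
      unfold Rdist in HN. rewrite Rabs_right in HN; lra.
    + intros eps He. destruct (H eps He) as [N HN]. exists (S N).
      specialize (HN N ltac:(lia)). rewrite psum_sum_f_R0 in HN. unfold Rdist in HN.
      apply Rabs_def2 in HN. lra.
  - intros [H1 H2] eps He. destruct (H2 eps He) as [K HK]. exists K. intros n Hn.
    rewrite psum_sum_f_R0. unfold Rdist.
    assert (psum u K <= psum u (S n)) by (apply psum_mono; auto; lia).
    specialize (H1 (S n)). rewrite Rabs_left1; lra.
Qed.

Lemma nnseries_bounded u B : (forall i, 0 <= u i) -> (forall K, psum u K <= B) ->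
  exists l, infinite_sum u l /\ l <= B.
Proof.
  intros Hu HB.
  destruct (completeness (fun x => exists K, x = psum u K)) as [m [Hm1 Hm2]].
  - exists B. intros x [K ->]. auto.
  - exists 0. exists O. reflexivity.
  - exists m. split.
    + apply nnseries_iff; auto. split.
      * intro K. apply Hm1. exists K; auto.
      * intros eps He. apply NNPP. intro Hn.
        assert (m <= m - eps); [|lra]. apply Hm2. intros x [K ->].
        apply Rnot_lt_le. intro; apply Hn; exists K; auto.
    + apply Hm2. intros x [K ->]; auto.
Qed.

Lemma nnseries_ge_psum u l K : (forall i, 0 <= u i) -> infinite_sum u l -> psum u K <= l.
Proof. intros Hu H. apply (nnseries_iff u l Hu) in H. apply H. Qed.

Lemma nnseries_le_bound u l B : (forall i, 0 <= u i) -> infinite_sum u l ->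
  (forall K, psum u K <= B) -> l <= B.
Proof.
  intros Hu H HB. apply nnseries_iff in H; auto. destruct H as [_ H].
  apply Rnot_lt_le. intro Hc. destruct (H (l - B) ltac:(lra)) as [K HK].
  specialize (HB K). lra.
Qed.

Lemma nnseries_mono u v l1 l2 : (forall i, 0 <= u i) -> (forall i, u i <= v i) ->
  infinite_sum u l1 -> infinite_sum v l2 -> l1 <= l2.
Proof.
  intros Hu Huv H1 H2. apply (nnseries_le_bound u l1 l2 Hu H1). intro K.
  apply Rle_trans with (psum v K); [apply psum_le; auto|].
  apply nnseries_ge_psum; auto. intro i; specialize (Hu i); specialize (Huv i); lra.
Qed.

Lemma nnseries_cofinal u v l : (forall i, 0 <= u i) -> (forall i, 0 <= v i) ->
  (forall K, exists K', psum u K <= psum v K') ->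
  (forall K, exists K', psum v K <= psum u K') ->
  infinite_sum u l -> infinite_sum v l.
Proof.
  intros Hu Hv H1 H2 H. apply nnseries_iff in H; auto. apply nnseries_iff; auto.
  destruct H as [Ha Hb]. split.
  - intro K. destruct (H2 K) as [K' HK']. specialize (Ha K'). lra.
  - intros eps He. destruct (Hb eps He) as [K HK]. destruct (H1 K) as [K' HK'].
    exists K'. lra.
Qed.

Lemma series_ext u v l : (forall i, u i = v i) -> infinite_sum u l -> infinite_sum v l.
Proof.
  intros H Hs eps He. destruct (Hs eps He) as [N HN]. exists N. intros n Hn.
  rewrite psum_sum_f_R0 (psum_ext v u); [rewrite -psum_sum_f_R0; apply HN; auto|].
  intros; rewrite H; auto.
Qed.

Lemma series_minus u v l1 l2 : infinite_sum u l1 -> infinite_sum v l2 ->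
  infinite_sum (fun i => u i - v i) (l1 - l2).
Proof.
  intros H1 H2 eps He. destruct (CV_minus _ _ _ _ H1 H2 eps He) as [N HN].
  exists N. intros n Hn. rewrite minus_sum. apply HN; auto.
Qed.

Lemma series_zero : infinite_sum (fun _ => 0) 0.
Proof.
  intros eps He. exists O. intros n _. rewrite sum_cte Rmult_0_l. unfold Rdist.
  rewrite Rminus_0_r Rabs_R0. exact He.
Qed.

Definition series_value (u : nat -> R) : R :=
  epsilon (inhabits 0) (fun l => infinite_sum u l).

Lemma series_value_spec u : (exists l, infinite_sum u l) -> infinite_sum u (series_value u).
Proof. apply (epsilon_spec (inhabits 0) (fun l => infinite_sum u l)). Qed.

Definition along {T : Type} (e : nat -> option T) (f : T -> R) (i : nat) : R :=
  match e i with Some x => f x | None => 0 end.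

Lemma along_nonneg {T} (e : nat -> option T) f :
  (forall x, 0 <= f x) -> forall i, 0 <= along e f i.
Proof. intros H i; unfold along; destruct (e i); [apply H|lra]. Qed.

Lemma cterm_nonneg (T : countType) (f : T -> R) :
  (forall x, 0 <= f x) -> forall i, 0 <= cterm f i.
Proof. intros H i; unfold cterm; destruct (pickle_inv i); [apply H|lra]. Qed.

Lemma pickle_inv_inj (T : countType) k k' (x : T) :
  pickle_inv k = Some x -> pickle_inv k' = Some x -> k = k'.
Proof.
  intros H1 H2. have E1 := @pickle_invK T k. have E2 := @pickle_invK T k'.
  rewrite H1 /= in E1. rewrite H2 /= in E2. congruence.
Qed.

Section Rearrangement.
Variable T : countType.
Variable f : T -> R.
Variable e : nat -> option T.
Hypothesis f_nonneg : forall x, 0 <= f x.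
Hypothesis e_inj : forall i j x, e i = Some x -> e j = Some x -> i = j.
Hypothesis e_support : forall x, 0 < f x -> exists i, e i = Some x.

Lemma listing_covers_prefix K : exists K', forall k, (k < K)%coq_nat ->
  forall x, pickle_inv k = Some x -> 0 < f x -> exists i, (i < K')%coq_nat /\ e i = Some x.
Proof.
  induction K as [|K [K' IH]].
  - exists O. intros; lia.
  - assert (Hold : forall k, (k < S K)%coq_nat -> k <> K -> forall x, pickle_inv k = Some x ->
                   0 < f x -> exists i, (i < K')%coq_nat /\ e i = Some x)
      by (intros k Hk Hne; apply IH; lia).
    destruct (@pickle_inv T K) as [x|] eqn:Ek;
      [destruct (Rlt_dec 0 (f x)) as [Hf|Hf]|].
    + destruct (e_support x Hf) as [i0 Hi0]. exists (Nat.max K' (S i0)).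
      intros k Hk y Hy Hfy. destruct (Nat.eq_dec k K) as [->|Hne].
      * rewrite Ek in Hy. injection Hy as <-. exists i0. split; [lia|auto].
      * destruct (Hold k Hk Hne y Hy Hfy) as [i [Hi Hei]]. exists i; split; [lia|auto].
    + exists K'. intros k Hk y Hy Hfy. destruct (Nat.eq_dec k K) as [->|Hne].
      * rewrite Ek in Hy. injection Hy as <-. lra.
      * exact (Hold k Hk Hne y Hy Hfy).
    + exists K'. intros k Hk y Hy Hfy. destruct (Nat.eq_dec k K) as [->|Hne].
      * rewrite Ek in Hy. discriminate.
      * exact (Hold k Hk Hne y Hy Hfy).
Qed.

Lemma enumeration_covers_prefix K : exists K', forall i, (i < K)%coq_nat ->
  forall x, e i = Some x -> (pickle x < K')%coq_nat.
Proof.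
  induction K as [|K [K' IH]].
  - exists O. intros; lia.
  - destruct (e K) as [x|] eqn:Ek.
    + exists (Nat.max K' (S (pickle x))). intros i Hi y Hy.
      destruct (Nat.eq_dec i K) as [->|Hne].
      * rewrite Ek in Hy. injection Hy as <-. lia.
      * specialize (IH i ltac:(lia) y Hy). lia.
    + exists K'. intros i Hi y Hy. destruct (Nat.eq_dec i K) as [->|Hne].
      * rewrite Ek in Hy; discriminate.
      * apply (IH i ltac:(lia) y Hy).
Qed.

Lemma enumeration_below_listing K : exists K', psum (cterm f) K <= psum (along e f) K'.
Proof.
  destruct (listing_covers_prefix K) as [K' HK']. exists K'.
  apply (psum_matching _ (fun k i => exists x, pickle_inv k = Some x /\ e i = Some x)).
  - intros k k' i _ _ [x [H1 H2]] [y [H3 H4]]. rewrite H2 in H4. injection H4 as <-.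
    apply (pickle_inv_inj _ _ _ x); auto.
  - apply along_nonneg; auto.
  - intros k Hk. unfold cterm. destruct (@pickle_inv T k) as [x|] eqn:Ek; [|left; auto].
    destruct (Rlt_dec 0 (f x)) as [Hf|Hf]; [|left; specialize (f_nonneg x); lra].
    right. destruct (HK' k Hk x Ek Hf) as [i [Hi Hei]]. exists i. split; [auto|].
    split; [unfold along; rewrite Hei; lra|]. exists x; auto.
Qed.

Lemma listing_below_enumeration K : exists K', psum (along e f) K <= psum (cterm f) K'.
Proof.
  destruct (enumeration_covers_prefix K) as [K' HK']. exists K'.
  apply (psum_matching _ (fun i k => exists x, e i = Some x /\ pickle_inv k = Some x)).
  - intros k k' i _ _ [x [H1 H2]] [y [H3 H4]]. rewrite H2 in H4. injection H4 as <-.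
    apply (e_inj _ _ x); auto.
  - apply cterm_nonneg; auto.
  - intros i Hi. unfold along. destruct (e i) as [x|] eqn:Ei; [|left; auto].
    right. exists (pickle x). split; [apply (HK' i Hi x Ei)|].
    unfold cterm. rewrite pickleK_inv. split; [lra|]. exists x; split; auto.
Qed.

Lemma csum_along l : has_csum f l <-> infinite_sum (along e f) l.
Proof.
  unfold has_csum. split; apply nnseries_cofinal;
    auto using cterm_nonneg, along_nonneg, enumeration_below_listing,
      listing_below_enumeration.
Qed.
End Rearrangement.

(* Cumulative sums a_k = cum P e k and cell probabilities p_i = lprob P e i of
   a sorted listing; [a_i, a_{i+1}) is the i-th cell, on which c^z equals
   ln (1 / p_i).  H t = mass_before P e t is the total probability of the
   cells starting strictly before t. *)
Section SortedListing.
Context {T : countType} {P : T -> R} {e : nat -> option T}.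
Hypothesis hP : is_pmf P.
Hypothesis he : sorted_listing P e.

Local Notation p := (lprob P e).
Local Notation a := (cum P e).

Lemma lprob_nonneg i : 0 <= p i.
Proof. unfold lprob. destruct (e i); [apply hP|lra]. Qed.

Lemma lprob_pos i : e i <> None -> 0 < p i.
Proof.
  intro H. unfold lprob. destruct (e i) as [x|] eqn:Ei; [|congruence].
  destruct he as [_ [_ [Hp _]]]. apply (Hp i x Ei).
Qed.

Lemma listing_none_after i j : (i <= j)%coq_nat -> e i = None -> e j = None.
Proof. destruct he as [Hn _]. induction 1; auto. Qed.

Lemma lprob_noninc i j : (i <= j)%coq_nat -> p j <= p i.
Proof.
  intro Hij. unfold lprob.
  destruct (e j) as [y|] eqn:Ej; [|destruct (e i); [apply hP|lra]].
  destruct (e i) as [x|] eqn:Ei.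
  - destruct he as [_ [_ [_ [_ Hs]]]]. apply (Hs i j x y Ei Ej). apply/leP. auto.
  - rewrite (listing_none_after i j Hij Ei) in Ej. discriminate.
Qed.

Lemma cum_S k : a (S k) = a k + p k.
Proof. reflexivity. Qed.

Lemma cum_psum k : a k = psum p k.
Proof. induction k; simpl; auto. rewrite IHk. reflexivity. Qed.

Lemma lprob_series : infinite_sum p 1.
Proof.
  destruct hP as [Hnn Hs]. destruct he as [_ [Hinj [_ [Hsurj _]]]].
  apply (csum_along T P e Hnn Hinj Hsurj) in Hs. apply (series_ext (along e P)); auto.
Qed.

Lemma cum_mono i j : (i <= j)%coq_nat -> a i <= a j.
Proof. intro H. rewrite !cum_psum. apply psum_mono; auto. apply lprob_nonneg. Qed.

Lemma cum_le1 k : a k <= 1.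
Proof. rewrite cum_psum. apply nnseries_ge_psum; [apply lprob_nonneg|apply lprob_series]. Qed.

Lemma cum_nonneg k : 0 <= a k.
Proof. rewrite cum_psum. apply psum_nonneg. apply lprob_nonneg. Qed.

Lemma cum_exhausts eps : 0 < eps -> exists K, 1 - eps < a K.
Proof.
  intro He. have := lprob_series. move/(nnseries_iff p 1 lprob_nonneg) => [_ H].
  destruct (H eps He) as [K HK]. exists K. rewrite cum_psum; auto.
Qed.

Lemma cell_exists t : 0 <= t < 1 -> exists i, a i <= t < a (S i).
Proof.
  intros [H0 H1]. destruct (cum_exhausts (1 - t) ltac:(lra)) as [K HK].
  assert (HK' : t < a K) by lra. clear HK.
  induction K as [|K IH]; [simpl in HK'; lra|].
  destruct (Rlt_dec t (a K)) as [Hl|Hl]; [exact (IH Hl)|].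
  exists K. lra.
Qed.

Lemma cell_unique t i j : a i <= t < a (S i) -> a j <= t < a (S j) -> i = j.
Proof.
  intros Hi Hj. destruct (Nat.lt_trichotomy i j) as [Hl|[|Hl]]; auto.
  - assert (a (S i) <= a j) by (apply cum_mono; lia). lra.
  - assert (a (S j) <= a i) by (apply cum_mono; lia). lra.
Qed.

Lemma cell_listed i : a i < a (S i) -> 0 < p i /\ exists x, e i = Some x.
Proof.
  simpl. intro H. split; [lra|].
  unfold lprob in H. destruct (e i) as [x|]; [exists x; auto|lra].
Qed.

Lemma cval_cell t i : a i <= t < a (S i) -> cval P e t (ln (1 / p i)).
Proof. intro H. exists i. split; auto. Qed.

Definition below_term (t : R) (i : nat) : R := if Rlt_dec (a i) t then p i else 0.

Definition mass_before (t : R) : R := series_value (below_term t).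

Lemma below_term_nonneg t i : 0 <= below_term t i.
Proof. unfold below_term. destruct (Rlt_dec _ _); cbn [is_left]; [apply lprob_nonneg|lra]. Qed.

Lemma below_term_le t i : below_term t i <= p i.
Proof. unfold below_term. destruct (Rlt_dec _ _); cbn [is_left]; [lra|apply lprob_nonneg]. Qed.

Lemma psum_below_term_le1 t K : psum (below_term t) K <= 1.
Proof.
  apply Rle_trans with (psum p K); [apply psum_le; intros; apply below_term_le|].
  rewrite -cum_psum. apply cum_le1.
Qed.

Lemma mass_before_series t : infinite_sum (below_term t) (mass_before t).
Proof.
  apply series_value_spec. destruct (nnseries_bounded (below_term t) 1) as [l [Hl _]].
  - apply below_term_nonneg.
  - apply psum_below_term_le1.
  - exists l; auto.
Qed.

Lemma mass_before_le1 t : mass_before t <= 1.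
Proof.
  apply (nnseries_le_bound (below_term t));
    auto using below_term_nonneg, mass_before_series, psum_below_term_le1.
Qed.

Lemma cum_le_mass_before t K : (forall i, (i < K)%coq_nat -> a i < t) -> a K <= mass_before t.
Proof.
  intro H. rewrite cum_psum. rewrite (psum_ext p (below_term t)).
  - apply nnseries_ge_psum; [apply below_term_nonneg|apply mass_before_series].
  - intros i Hi. unfold below_term. destruct (Rlt_dec _ _); cbn [is_left]; auto.
    specialize (H i Hi). lra.
Qed.

Lemma mass_before_le_cum t k : t <= a k -> mass_before t <= a k.
Proof.
  intro Hk. apply (nnseries_le_bound (below_term t));
    [apply below_term_nonneg|apply mass_before_series|].
  intro K. induction K as [|K IH]; [apply cum_nonneg|].
  destruct (Compare_dec.le_lt_dec k K) as [Hl|Hl].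
  - simpl. unfold below_term at 2. destruct (Rlt_dec _ _); cbn [is_left]; [|lra].
    assert (a k <= a K) by (apply cum_mono; lia). lra.
  - apply Rle_trans with (psum p (S K)); [apply psum_le; intros; apply below_term_le|].
    rewrite -cum_psum. apply cum_mono. lia.
Qed.

(* H t >= t: the cell containing t starts before t. *)
Lemma mass_before_ge t : t <= 1 -> t <= mass_before t.
Proof.
  intro Ht. destruct (classic (exists K, t <= a K)) as [[K HK]|Hn].
  - assert (HN : exists N, t <= a N /\ forall i, (i < N)%coq_nat -> a i < t).
    { clear Ht. induction K as [|K IH].
      - exists O. split; auto. intros; lia.
      - destruct (Rle_dec t (a K)) as [Hl|Hl]; [apply IH; auto|].
        exists (S K). split; auto. intros i Hi.
        assert (a i <= a K) by (apply cum_mono; lia). lra. }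
    destruct HN as [N [HN1 HN2]]. have := cum_le_mass_before t N HN2. lra.
  - apply Rle_plus_epsilon. intros eps He. destruct (cum_exhausts eps He) as [K HK].
    assert (a K <= mass_before t); [|lra].
    apply cum_le_mass_before. intros i _. apply Rnot_le_lt. intro; apply Hn; exists i; auto.
Qed.

Lemma mass_before_mono t s : t <= s -> mass_before t <= mass_before s.
Proof.
  intro H. apply (nnseries_mono (below_term t) (below_term s));
    auto using mass_before_series, below_term_nonneg.
  intro i. unfold below_term. have := lprob_nonneg i.
  destruct (Rlt_dec (a i) t); destruct (Rlt_dec (a i) s); cbn [is_left]; lra.
Qed.

(* H is constant on [t, H t]: no cell starts in [t, H t). *)
Lemma mass_before_flat t s : t <= s -> s <= mass_before t -> mass_before s = mass_before t.
Proof.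
  intros H1 H2. apply (uniqueness_sum (below_term s)); [apply mass_before_series|].
  apply (series_ext (below_term t)); [|apply mass_before_series].
  intro i. unfold below_term. destruct (Rlt_dec (a i) t); destruct (Rlt_dec (a i) s);
    cbn [is_left]; auto; try lra.
  exfalso. have := mass_before_le_cum t i ltac:(lra). lra.
Qed.

Lemma mass_before_0 : mass_before 0 = 0.
Proof.
  have := mass_before_le_cum 0 0 ltac:(simpl; lra). have := mass_before_ge 0. simpl. lra.
Qed.

End SortedListing.

Arguments below_term {T} P e t i.
Arguments mass_before {T} P e t.

(* Subadditivity of Lebesgue measure, for finitely many disjoint half-open
   intervals [u_k, v_k) inside A: their total length is at most any bound r
   on the outer measure of A.  Proved with MathComp-Analysis's Lebesgue
   measure on the real numbers of the standard library. *)
Section DisjointIntervals.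
Import all_boot all_order all_algebra all_classical all_reals all_analysis.
Import Rstruct Rstruct_topology.
Import Order.TTheory GRing.Theory Num.Theory.
Local Open Scope classical_set_scope.

Lemma psum_bigop (f : nat -> R) M : psum f M = (\sum_(k < M) f k)%R.
Proof. elim: M => [|M IH]; first by rewrite big_ord0. by rewrite big_ord_recr /= IH. Qed.

Lemma in_itv_co (x y t : R) : t \in `[x, y[%R <-> x <= t < y.
Proof. by rewrite in_itv /=; split => [/andP[/RleP ? /RltP ?]|[/RleP -> /RltP ->]]. Qed.

Lemma lebesgue_measure_itv_length (x y : R) b1 b2 : x <= y ->
  lebesgue_measure [set` Interval (BSide b1 x) (BSide b2 y)] = (y - x)%:E.
Proof.
  move=> /RleP hxy; have := @lebesgue_measure_itv R (Interval (BSide b1 x) (BSide b2 y)).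
  move=> /= ->; rewrite lte_fin; case: ltrP => // hyx.
  have -> : y = x by apply/le_anti; rewrite hxy hyx.
  by rewrite subrr.
Qed.

Lemma disjoint_intervals_le (A : R -> Prop) (r : R) (u v : nat -> R) (M : nat) :
  outer_measure_le A r ->
  (forall k, (k < M)%coq_nat -> u k <= v k) ->
  (forall k, (k < M)%coq_nat -> forall x, u k <= x < v k -> A x) ->
  (forall k k' x, (k < M)%coq_nat -> (k' < M)%coq_nat ->
     u k <= x < v k -> u k' <= x < v k' -> k = k') ->
  psum (fun k => v k - u k) M <= r.
Proof.
  move=> hA huv hsub hdis; apply: Rle_plus_epsilon => eps heps.
  have [a [b [hab [hcov hsum]]]] := hA eps heps.
  set U := \big[setU/set0]_(k < M) `[u k, v k[%classic.
  (* lambda(U) is the total length, by finite additivity ... *)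
  have mU : (@lebesgue_measure R) U = (\sum_(k < M) (v k - u k)%:E)%E.
    rewrite /U measure_bigsetU_ord //.
    - by apply: eq_bigr => k _; apply/lebesgue_measure_itv_length/huv/ssrnat.ltP.
    - move=> i j _ _ [x /= [/in_itv_co hi /in_itv_co hj]].
      by apply: val_inj; apply: (hdis i j x) => //; apply/ssrnat.ltP.
  (* ... U is covered by the intervals ]a_i, b_i[ ... *)
  have Ucov : U `<=` \bigcup_i `]a i, b i[%classic.
    move=> x; rewrite /U -(bigcup_mkord M (fun k => `[u k, v k[%classic)).
    move=> -[k /= /ssrnat.ltP hk /in_itv_co hx].
    have [i hi] := hcov x (hsub k hk x hx).
    by exists i => //=; rewrite in_itv /=; apply/andP; split; apply/RltP; case: hi.
  (* ... whose total length is at most r + eps. *)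
  have hseries :
      (\sum_(i <oo) (@lebesgue_measure R) `]a i, b i[%classic <= (r + eps)%:E)%E.
    apply: lime_le; first by apply: is_cvg_nneseries.
    apply: nearW => n /=.
    rewrite big_mkord (eq_bigr (fun i : 'I_n => (b i - a i)%:E)) => [|i _]; last first.
      exact: lebesgue_measure_itv_length.
    rewrite sumEFin lee_fin -(psum_bigop (fun i => b i - a i)); apply/RleP.
    case: n => [|m]; last by rewrite -psum_sum_f_R0.
    by rewrite /= -RplusE; have := hsum 0%N; have := hab 0%N; rewrite /=; lra.
  have : ((@lebesgue_measure R) U <= (r + eps)%:E)%E.
    apply: le_trans hseries; apply: measure_sigma_subadditive => //.
    by apply: bigsetU_measurable => k _; exact: measurable_itv.
  by rewrite mU sumEFin lee_fin psum_bigop => /RleP.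
Qed.

End DisjointIntervals.

Lemma self_information_gap p q g : 0 < p -> 0 < q ->
  g <= ln (1 / p) - ln (1 / q) -> p <= exp (- g) * q.
Proof.
  intros Hp Hq. rewrite !Rdiv_1_l !ln_Rinv //. intro Hg.
  rewrite -{1}(exp_ln p Hp) -(exp_ln q Hq) -exp_plus.
  destruct (Rle_lt_or_eq_dec (ln p) (- g + ln q)) as [Hl| ->]; [lra| |lra].
  left. apply exp_increasing. exact Hl.
Qed.

Definition bad_set {TX TY : countType} (PX : TX -> R) (PY : TY -> R)
  (ex : nat -> option TX) (ey : nat -> option TY) (gamma delta : R) : Prop :=
  (0 <= delta < 1) /\
  exists cx cy, cval PX ex delta cx /\ cval PY ey delta cy /\ cx - cy < gamma.

(* Cells of X are [a_i, a_{i+1}) with probability p_i, cells of Y are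
   [b_j, b_{j+1}) with probability q_j, and H = mass_before PX ex (written
   HX below).  The map phi built later gives y_j the mass H(b_{j+1}) - H(b_j),
   whose deviation from q_j is the increment over [b_j, b_{j+1}] of the
   excess H(t) - t. *)
Section StepEstimate.
Context {TX TY : countType} {PX : TX -> R} {PY : TY -> R}
  {ex : nat -> option TX} {ey : nat -> option TY}.
Hypothesis hPX : is_pmf PX.
Hypothesis hPY : is_pmf PY.
Hypothesis hex : sorted_listing PX ex.
Hypothesis hey : sorted_listing PY ey.
Variable gamma : R.

Local Notation a := (cum PX ex).
Local Notation p := (lprob PX ex).
Local Notation b := (cum PY ey).
Local Notation q := (lprob PY ey).
Local Notation HX := (mass_before PX ex).
Local Notation bad := (bad_set PX PY ex ey gamma).

Definition excess (t : R) : R := HX t - t.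

Definition excess_step (j : nat) : R := excess (b (S j)) - excess (b j).

(* Right end of the j-th bad block: the block is [b_{j+1}, H(b_{j+1})) when
   H(b_j) < b_{j+1} and every point of that interval is bad; otherwise it is
   empty. *)
Definition bad_block_end (j : nat) : R :=
  if excluded_middle_informative
       (HX (b j) < b (S j) /\ forall d, b (S j) <= d < HX (b (S j)) -> bad d)
  then HX (b (S j)) else b (S j).

Lemma excess_nonneg t : t <= 1 -> 0 <= excess t.
Proof. intro. unfold excess. have := mass_before_ge hPX hex t. lra. Qed.

Lemma bad_block_end_ge j : b (S j) <= bad_block_end j.
Proof.
  unfold bad_block_end. have := mass_before_ge hPX hex (b (S j)) (cum_le1 hPY hey _).
  destruct (excluded_middle_informative _); cbn [is_left]; lra.
Qed.

Lemma bad_block_bad j x : b (S j) <= x < bad_block_end j -> bad x.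
Proof.
  intro Hx. unfold bad_block_end in Hx.
  destruct (excluded_middle_informative _) as [[Hrise Hall]|Hnot]; cbn [is_left] in Hx;
    [apply Hall; exact Hx|lra].
Qed.

(* Bad blocks are disjoint: the k-th one ends at H(b_{k+1}) <= H(b_{k'}),
   and the k'-th one exists only if H(b_{k'}) < b_{k'+1}. *)
Lemma bad_blocks_disjoint k k' x : (k < k')%coq_nat ->
  b (S k) <= x < bad_block_end k -> b (S k') <= x < bad_block_end k' -> False.
Proof.
  intros Hkk Hx Hx'. unfold bad_block_end in Hx, Hx'.
  destruct (excluded_middle_informative _) as [Hblock|]; cbn [is_left] in Hx; [|lra].
  destruct (excluded_middle_informative _) as [[Hrise' Hall']|]; cbn [is_left] in Hx'; [|lra].
  assert (Hkk' : (S k <= k')%coq_nat) by lia.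
  have := mass_before_mono hPX hex _ _ (cum_mono (e := ey) hPY (S k) k' Hkk'). lra.
Qed.

(* If H(b_j) >= b_{j+1}, H is flat on [b_j, b_{j+1}] and the excess drops. *)
Lemma excess_step_flat j : b (S j) <= HX (b j) -> excess_step j <= 0.
Proof.
  intro Hflat. have := cum_mono (e := ey) hPY j (S j) ltac:(lia).
  intro Hb. unfold excess_step, excess.
  rewrite (mass_before_flat hPX hex (b j) (b (S j))) //. lra.
Qed.

(* A good point d in [b_{j+1}, H(b_{j+1})) lies in some X-cell i starting
   before b_{j+1} and in some Y-cell m >= j, so the excess at b_{j+1} is at
   most p_i <= e^{-gamma} q_m <= e^{-gamma} q_j. *)
Lemma excess_at_good_point j d : b (S j) <= d < HX (b (S j)) -> ~ bad d ->
  excess (b (S j)) <= exp (- gamma) * q j.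
Proof.
  intros Hd Hgood.
  have H1 := mass_before_le1 hPX hex (b (S j)). have Hb0 := cum_nonneg (e := ey) hPY (S j).
  destruct (cell_exists hPX hex d ltac:(lra)) as [i Hi].
  destruct (cell_exists hPY hey d ltac:(lra)) as [m Hm].
  have [Hpi _] := cell_listed (P := PX) (e := ex) i ltac:(lra).
  have [Hqm _] := cell_listed (P := PY) (e := ey) m ltac:(lra).
  assert (Hgap : gamma <= ln (1 / p i) - ln (1 / q m)).
  { apply Rnot_lt_le. intro Hlt. apply Hgood. split; [lra|].
    exists (ln (1 / p i)), (ln (1 / q m)).
    split; [apply cval_cell; auto|]. split; [apply cval_cell; auto|auto]. }
  have Hpq := self_information_gap (p i) (q m) gamma Hpi Hqm Hgap.
  assert (Hjm : (j <= m)%coq_nat).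
  { destruct (Compare_dec.le_lt_dec j m) as [|Hl]; auto.
    have := cum_mono (e := ey) hPY (S m) (S j) ltac:(lia). lra. }
  have Hqmj := lprob_noninc hPY hey j m Hjm.
  assert (Hai : a i < b (S j)).
  { apply Rnot_le_lt. intro Hc. have := mass_before_le_cum hPX hex (b (S j)) i Hc. lra. }
  have HaS := mass_before_le_cum hPX hex (b (S j)) (S i) ltac:(lra).
  have He := exp_pos (- gamma).
  assert (exp (- gamma) * q m <= exp (- gamma) * q j) by (apply Rmult_le_compat_l; lra).
  rewrite cum_S in Hi HaS. unfold excess. lra.
Qed.

Lemma excess_step_bound j :
  Rmax 0 (excess_step j) <= exp (- gamma) * q j + (bad_block_end j - b (S j)).
Proof.
  have Hq := lprob_nonneg (e := ey) hPY j. have He := exp_pos (- gamma).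
  have Hend := bad_block_end_ge j.
  assert (0 <= exp (- gamma) * q j) by (apply Rmult_le_pos; lra).
  apply Rmax_lub; [lra|].
  destruct (Rlt_dec (HX (b j)) (b (S j))) as [Hrise|Hflat].
  2: { have := excess_step_flat j ltac:(lra). lra. }
  have := excess_nonneg (b j) (cum_le1 hPY hey j). unfold excess_step. intro Hexj.
  enough (excess (b (S j)) <= exp (- gamma) * q j + (bad_block_end j - b (S j))) by lra.
  unfold bad_block_end.
  destruct (excluded_middle_informative _) as [Hblock|Hnot]; cbn [is_left].
  - unfold excess. lra.
  - assert (Hgood : exists d, b (S j) <= d < HX (b (S j)) /\ ~ bad d).
    { apply NNPP. intro Hc. apply Hnot. split; auto. intros d Hd. apply NNPP. intro Hb.
      apply Hc. exists d; auto. }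
    destruct Hgood as [d [Hd Hgood]]. have := excess_at_good_point j d Hd Hgood. lra.
Qed.

(* Summing: the steps telescope to excess (b_M) >= 0, so the total absolute
   variation is at most twice the positive part, and the bad blocks are
   disjoint subsets of the bad set. *)
Lemma total_variation_bound r M : outer_measure_le bad r ->
  psum (fun j => Rabs (excess_step j)) M <= 2 * (exp (- gamma) + r).
Proof.
  intro hm.
  assert (Habs : psum (fun j => Rabs (excess_step j)) M
                 = 2 * psum (fun j => Rmax 0 (excess_step j)) M - psum excess_step M).
  { rewrite -psum_scal -psum_minus. apply psum_ext. intros j _.
    unfold Rmax. destruct (Rle_dec 0 (excess_step j)); cbn [is_left].
    - rewrite Rabs_right; lra.
    - rewrite Rabs_left; lra. }
  assert (Htel : psum excess_step M = excess (b M) - excess (b 0))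
    by apply (psum_telescope (fun j => excess (b j))).
  assert (Hexcess0 : excess (b 0) = 0).
  { unfold excess. simpl. rewrite (mass_before_0 hPX hex). lra. }
  have HexM := excess_nonneg (b M) (cum_le1 hPY hey M).
  assert (Hmeas : psum (fun j => bad_block_end j - b (S j)) M <= r).
  { apply (disjoint_intervals_le bad r (fun j => b (S j)) bad_block_end M hm).
    - intros k _. apply bad_block_end_ge.
    - intros k _. apply bad_block_bad.
    - intros k k' x _ _ Hx Hx'. destruct (Nat.lt_trichotomy k k') as [Hl|[|Hl]]; auto.
      + exfalso; apply (bad_blocks_disjoint k k' x); auto.
      + exfalso; apply (bad_blocks_disjoint k' k x); auto. }
  assert (Hpos : psum (fun j => Rmax 0 (excess_step j)) M
                 <= exp (- gamma) * b M + psum (fun j => bad_block_end j - b (S j)) M).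
  { rewrite (cum_psum (P := PY) (e := ey)) -psum_scal -psum_plus. apply psum_le.
    intros; apply excess_step_bound. }
  have HbM := cum_le1 hPY hey M. have He := exp_pos (- gamma).
  assert (exp (- gamma) * b M <= exp (- gamma)).
  { rewrite -{2}(Rmult_1_r (exp (- gamma))). apply Rmult_le_compat_l; lra. }
  lra.
Qed.

End StepEstimate.

Arguments excess {TX} PX ex t.
Arguments excess_step {TX TY} PX PY ex ey j.

Definition preimage_mass {TX TY : countType} (PX : TX -> R) (phi : TX -> TY)
  (y : TY) (x : TX) : R :=
  if phi x == y then PX x else 0.

(* The cell-matching map phi: the i-th listed element of X goes to the listed
   element of Y whose cell contains a_i; its pushforward gives y_j the mass
   H(b_{j+1}) - H(b_j), hence d(P_Y, P_phi(X)) = sum_j |excess_step j|. *)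
Section CellMap.
Context {TX TY : countType} {PX : TX -> R} {PY : TY -> R}
  {ex : nat -> option TX} {ey : nat -> option TY}.
Hypothesis hPX : is_pmf PX.
Hypothesis hPY : is_pmf PY.
Hypothesis hex : sorted_listing PX ex.
Hypothesis hey : sorted_listing PY ey.

Local Notation a := (cum PX ex).
Local Notation b := (cum PY ey).
Local Notation HX := (mass_before PX ex).

Definition cell_map_spec (x : TX) (y : TY) : Prop :=
  forall i, ex i = Some x -> exists j, ey j = Some y /\ b j <= a i < b (S j).

Lemma listed_cell_at t : 0 <= t < 1 -> exists j y, ey j = Some y /\ b j <= t < b (S j).
Proof.
  intro Ht. destruct (cell_exists hPY hey t Ht) as [j Hj].
  destruct (cell_listed (P := PY) (e := ey) j ltac:(lra)) as [_ [y Hy]]. exists j, y; auto.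
Qed.

Lemma cell_map_exists x : exists y, cell_map_spec x y.
Proof.
  destruct (classic (exists i, ex i = Some x)) as [[i0 Hi0]|Hn].
  - have Hp := lprob_pos hex i0 ltac:(congruence).
    have := cum_le1 hPX hex (S i0). rewrite cum_S. have := cum_nonneg (e := ex) hPX i0.
    intros Ha0 Ha1. destruct (listed_cell_at (a i0) ltac:(lra)) as [j [y [Hy Hj]]].
    exists y. intros i Hi. destruct hex as [_ [Hinj _]].
    rewrite (Hinj i i0 x Hi Hi0). exists j; auto.
  - destruct (listed_cell_at 0 ltac:(lra)) as [j [y [Hy Hj]]].
    exists y. intros i Hi. exfalso; apply Hn; exists i; auto.
Qed.

Variable phi : TX -> TY.
Hypothesis hphi : forall x, cell_map_spec x (phi x).

Lemma preimage_mass_nonneg y x : 0 <= preimage_mass PX phi y x.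
Proof. unfold preimage_mass. destruct (phi x == y); [apply hPX|lra]. Qed.

Lemma preimage_mass_support y x : 0 < preimage_mass PX phi y x -> exists i, ex i = Some x.
Proof.
  unfold preimage_mass. destruct (phi x == y); [|lra].
  destruct hex as [_ [_ [_ [Hs _]]]]. apply Hs.
Qed.

Lemma pushforward_along y l :
  infinite_sum (along ex (preimage_mass PX phi y)) l -> pushforward_is PX phi y l.
Proof.
  apply (csum_along TX (preimage_mass PX phi y) ex (preimage_mass_nonneg y));
    [destruct hex as [_ [Hinj _]]; exact Hinj|apply preimage_mass_support].
Qed.

Lemma preimage_mass_cell j y i : ey j = Some y ->
  along ex (preimage_mass PX phi y) i
  = below_term PX ex (b (S j)) i - below_term PX ex (b j) i.
Proof.
  intro Hj0. have Hbj := cum_mono (e := ey) hPY j (S j) ltac:(lia).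
  unfold along, below_term, preimage_mass, lprob. destruct (ex i) as [x|] eqn:Ei;
    [|destruct (Rlt_dec (a i) (b (S j))); destruct (Rlt_dec (a i) (b j)); cbn [is_left]; lra].
  destruct (hphi x i Ei) as [j' [Hj' Hcell]].
  destruct hey as [_ [Hinj _]].
  destruct (phi x == y) eqn:E.
  - move/eqP: E => E. rewrite E in Hj'. rewrite (Hinj j' j y Hj' Hj0) in Hcell.
    destruct (Rlt_dec (a i) (b (S j))); destruct (Rlt_dec (a i) (b j)); cbn [is_left]; lra.
  - assert (Hne : j' <> j).
    { intro Hc. subst j'. rewrite Hj0 in Hj'. injection Hj' as Hj'.
      rewrite Hj' eqxx in E. discriminate. }
    destruct (Rlt_dec (a i) (b (S j))); destruct (Rlt_dec (a i) (b j)); cbn [is_left];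
      try lra.
    exfalso. apply Hne. apply (cell_unique (e := ey) hPY (a i)); auto. lra.
Qed.

Lemma pushforward_listed j y : ey j = Some y ->
  pushforward_is PX phi y (HX (b (S j)) - HX (b j)).
Proof.
  intro Hj. apply pushforward_along.
  apply (series_ext (fun i => below_term PX ex (b (S j)) i - below_term PX ex (b j) i)).
  - intro i. symmetry. apply preimage_mass_cell; auto.
  - apply series_minus; apply (mass_before_series hPX hex).
Qed.

Lemma pushforward_unlisted y : (forall j, ey j <> Some y) -> pushforward_is PX phi y 0.
Proof.
  intro Hn. apply pushforward_along. apply (series_ext (fun _ => 0)); [|apply series_zero].
  intro i. unfold along, preimage_mass. destruct (ex i) as [x|] eqn:Ei; auto.
  destruct (phi x == y) eqn:E; auto. move/eqP: E => E.
  destruct (hphi x i Ei) as [j' [Hj' _]]. exfalso. apply (Hn j'). rewrite -E. auto.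
Qed.

Definition push_mass (y : TY) : R := series_value (cterm (preimage_mass PX phi y)).

Lemma push_mass_spec y : pushforward_is PX phi y (push_mass y).
Proof.
  apply series_value_spec.
  destruct (classic (exists j, ey j = Some y)) as [[j Hj]|Hn].
  - eexists. apply (pushforward_listed j y Hj).
  - exists 0. apply pushforward_unlisted. intros j Hj. apply Hn. exists j; auto.
Qed.

Lemma push_mass_listed j y : ey j = Some y -> push_mass y = HX (b (S j)) - HX (b j).
Proof.
  intro Hj. apply (uniqueness_sum _ _ _ (push_mass_spec y) (pushforward_listed j y Hj)).
Qed.

Lemma deviation_along j :
  along ey (fun y => Rabs (PY y - push_mass y)) j = Rabs (excess_step PX PY ex ey j).
Proof.
  unfold along, excess_step, excess. have HS := cum_S (P := PY) (e := ey) j.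
  unfold lprob in HS. destruct (ey j) as [y|] eqn:Ej.
  - rewrite (push_mass_listed j y Ej) -Rabs_Ropp. f_equal. lra.
  - rewrite Rplus_0_r in HS. rewrite HS Rminus_diag Rabs_R0. reflexivity.
Qed.

(* Unlisted y have P_Y(y) = 0 and no preimage, so the deviation lives on the
   listing of Y. *)
Lemma deviation_support y : 0 < Rabs (PY y - push_mass y) -> exists j, ey j = Some y.
Proof.
  intro Hy. apply NNPP. intro Hn.
  assert (HQ : push_mass y = 0).
  { apply (uniqueness_sum _ _ _ (push_mass_spec y)). apply pushforward_unlisted.
    intros j Hj. apply Hn. exists j; auto. }
  assert (HP : PY y = 0).
  { destruct hPY as [Hnn _]. destruct (Hnn y) as [Hlt|]; auto.
    exfalso. apply Hn. destruct hey as [_ [_ [_ [Hs _]]]]. apply Hs; auto. }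
  rewrite HQ HP Rminus_0_r Rabs_R0 in Hy. lra.
Qed.

Lemma cell_map_distance gamma r : outer_measure_le (bad_set PX PY ex ey gamma) r ->
  exists d, var_dist_push_is PX PY phi d /\ d <= 2 * (exp (- gamma) + r).
Proof.
  intro hm.
  destruct (nnseries_bounded (fun j => Rabs (excess_step PX PY ex ey j))
              (2 * (exp (- gamma) + r))) as [d [Hd Hdle]].
  - intro; apply Rabs_pos.
  - intro M. apply (total_variation_bound hPX hPY hex hey gamma r M hm).
  - exists d. split; auto. exists push_mass. split; [exact push_mass_spec|].
    apply (csum_along TY (fun y => Rabs (PY y - push_mass y)) ey);
      [intro; apply Rabs_pos|now destruct hey as [_ [Hinj _]]|exact deviation_support|].
    apply (series_ext (fun j => Rabs (excess_step PX PY ex ey j))); [|exact Hd].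
    intro j. symmetry. apply deviation_along.
Qed.

End CellMap.

Arguments cell_map_spec {TX TY} PX PY ex ey x y.

Theorem theorem1
  (X Y : nat -> countType)
  (PX : forall n, X n -> R) (PY : forall n, Y n -> R)
  (hPX : forall n, is_pmf (PX n)) (hPY : forall n, is_pmf (PY n))
  (ex : forall n, nat -> option (X n)) (ey : forall n, nat -> option (Y n))
  (hex : forall n, sorted_listing (PX n) (ex n))
  (hey : forall n, sorted_listing (PY n) (ey n))
  (hyp : forall gamma : R,
     measure_tends_to_zero (fun n delta =>
       (0 <= delta < 1)%R /\
       exists cx cy, cval (PX n) (ex n) delta cx /\ cval (PY n) (ey n) delta cy
                     /\ (cx - cy < gamma)%R)) :
  approximating_source PX PY.
Proof.
  pose (phi := fun n (x : X n) => proj1_sig (constructive_indefinite_description _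
      (cell_map_exists (hPX n) (hPY n) (hex n) (hey n) x))).
  have hphi : forall n x, cell_map_spec (PX n) (PY n) (ex n) (ey n) x (phi n x)
    by intros n x; exact (proj2_sig (constructive_indefinite_description _ _)).
  exists phi. intros eps Heps.
  (* Choose gamma with e^{-gamma} = eps/8 and n large so that the bad set has
     measure at most eps/8; the distance is then at most eps/2. *)
  set (gamma := - ln (eps / 8)).
  have Hg : exp (- gamma) = eps / 8
    by unfold gamma; rewrite Ropp_involutive; apply exp_ln; lra.
  destruct (hyp gamma (eps / 8) ltac:(lra)) as [N HN].
  exists N. intros n Hn.
  destruct (cell_map_distance (hPX n) (hPY n) (hex n) (hey n) (phi n) (hphi n)
              gamma (eps / 8) (HN n Hn)) as [d [Hd Hdle]].
  exists d. split; auto. rewrite Hg in Hdle. lra.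
Qed.
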